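(* Let $n\geq 4$. Then there are exactly $8$ $F_n$-good matrices, and under matrix multiplication over $\mathbb{Z}_2$ they form a group isomorphic to the dihedral group $D_4$ of order $8$. For $n=3$, there are exactly $6$ $F_3$-good matrices, and under matrix multiplication they form a group isomorphic to the symmetric group $\mathfrak{S}_3$.
   Context: For $n\geq 1$, the Fibonacci cube $F_n$ is identified with the set of vectors $\vec{x}=(x_1,\ldots,x_n)\in\mathbb{Z}_2^n$ having no two adjacent ones, i.e. there is no $i$ with $1\leq i\leq n-1$ and $x_i=x_{i+1}=1$. An $n\times n$ matrix $A$ with entries in $\mathbb{Z}_2$ is called $F_n$-good if $A$ is invertible over $\mathbb{Z}_2$ and $A\vec{x}\in F_n$ for every $\vec{x}\in F_n$ (such matrices are the ''linear permutations'' of $F_n$). *)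

From HB Require Import structures.
From mathcomp Require Import all_boot all_order all_algebra all_fingroup all_solvable.
Set Implicit Arguments. Unset Strict Implicit. Unset Printing Implicit Defensive.
Import GRing.Theory.
Local Open Scope ring_scope.

(* Vectors of Z_2^n are column vectors 'cV['F_2]_n; coordinate i is x i 0. *)

(* x is a vertex of the Fibonacci cube F_n: no two adjacent ones,
   i.e. no i with x_i = x_{i+1} = 1. *)
Definition fib_vec (n : nat) (x : 'cV['F_2]_n) : bool :=
  [forall i : 'I_n, forall j : 'I_n,
     (nat_of_ord j == (nat_of_ord i).+1)%N ==> ~~ ((x i 0 == 1) && (x j 0 == 1))].

Definition Fgood (n : nat) (A : 'M['F_2]_n) : bool :=
  (A \in unitmx) && [forall x : 'cV['F_2]_n, fib_vec x ==> fib_vec (A *m x)].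

From HB Require Import structures.
From mathcomp Require Import all_boot all_order all_algebra all_fingroup all_solvable.
From mathcomp Require Import zify.
Import GRing.Theory.

Set Implicit Arguments.
Unset Strict Implicit.
Unset Printing Implicit Defensive.

(* An invertible matrix over Z_2 maps F_n into F_n exactly when, for any two
   consecutive rows, every 1 of the first is in a column adjacent to every 1 of the
   second (test it on unit vectors e_x and on sums e_x + e_y of non-adjacent ones).
   With rows and columns nonempty and rows distinct, a row with two 1s would force
   both neighbouring rows onto the single common neighbour column, so the interior
   rows carry a single 1 each; these cannot backtrack, so they run along the diagonal
   or the antidiagonal, and covering the first and last columns pins them down.
   Only the first and last rows may carry an extra 1: A = E_{c,d} or E_{c,d} J,
   where J reverses the columns and E_{c,d} is the identity with optional extra 1s
   at (0,2) and (n-1,n-3).  For n >= 4 these eight matrices are all good; for n = 3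
   the outer rows are distinct nonempty subsets of {0,2}, leaving at most six.
   The good matrices form a group containing the non-commuting involutions J and
   E_{1,0}; they generate a dihedral group of order at least 6, which is the whole
   group since it has at most 8 elements. *)

Definition adjacent (x y : nat) : bool := (x.+1 == y) || (y.+1 == x).

Lemma adjacentP x y : reflect (x.+1 = y \/ y.+1 = x) (adjacent x y).
Proof. by apply: (iffP orP) => -[] /eqP; [left | right | left | right]. Qed.

Lemma adjacentC x y : adjacent x y = adjacent y x.
Proof. exact: orbC. Qed.

Ltac adjacent_lia :=
  repeat match goal with H : is_true (adjacent _ _) |- _ => case/adjacentP: H => H end;
  lia.

(* Properties of the support [a] of an F_{N+1}-good matrix, indexed from 0 to [N]:
   [support_adjacent] comes from the Fibonacci condition, the other fields from
   invertibility. *)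
Record good_support (N : nat) (a : nat -> nat -> bool) : Prop := GoodSupport {
  support_bounded : forall i j, a i j -> i <= N /\ j <= N;
  support_adjacent : forall i x y, a i x -> a i.+1 y -> adjacent x y;
  support_row : forall i, i <= N -> exists j, a i j;
  support_col : forall j, j <= N -> exists i, a i j;
  support_rows_differ : forall i i', i < i' -> i' <= N -> exists j, a i j != a i' j }.

Definition fib_pattern (N : nat) (c d : bool) (i j : nat) : bool :=
  [|| i == j, c && (i == 0) && (j == 2) | d && (i == N) && (j == N - 2)].

Section GoodSupport.
Variables (N : nat) (a : nat -> nat -> bool).
Hypothesis aS : good_support N a.

Lemma rows_differ i i' : i < i' -> i' <= N -> ~ a i =1 a i'.
Proof.
move=> lt_ii' le_i'N eq_a.
by have [j] := support_rows_differ aS lt_ii' le_i'N; rewrite eq_a eqxx.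
Qed.

Lemma row_singleton i p : a i p -> (forall j, a i j -> j = p) -> a i =1 pred1 p.
Proof. by move=> aip uniq_p j; apply/idP/eqP => [/uniq_p | ->]. Qed.

Lemma interior_row_unique i x x' : 0 < i < N -> a i x -> a i x' -> x = x'.
Proof.
case: i => [|k] // /andP[_ lt_kN] ax ax'; apply/eqP/negPn/negP => neq_xx'.
have [y ay] := support_row aS (ltnW (ltnW lt_kN)).
have common w : adjacent w x -> adjacent w x' -> w = y.
  move=> ? ?; have ? := support_adjacent aS ay ax; have ? := support_adjacent aS ay ax'.
  by move/eqP: neq_xx' => ?; adjacent_lia.
have below w : a k w -> w = y.
  by move=> aw; apply: common;
    [exact: (support_adjacent aS aw ax) | exact: (support_adjacent aS aw ax')].
have above w : a k.+2 w -> w = y.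
  by move=> aw; apply: common; rewrite adjacentC;
    [exact: (support_adjacent aS ax aw) | exact: (support_adjacent aS ax' aw)].
have [z az] := support_row aS lt_kN; have Ez := above _ az; rewrite {}Ez in az.
apply: (rows_differ (i := k) (i' := k.+2)) => // j.
by rewrite (row_singleton ay below) (row_singleton az above).
Qed.

Lemma interior_row i p : 0 < i < N -> a i p -> a i =1 pred1 p.
Proof. by move=> lt_iN aip; apply: row_singleton => // j /(interior_row_unique lt_iN aip). Qed.

Section Increasing.
Hypothesis N_gt2 : 2 < N.
Variable p : nat.
Hypotheses (a1p : a 1 p) (a2p : a 2 p.+1).

Lemma increasing_interior_rows k : k.+2 <= N -> a k.+1 =1 pred1 (p + k).
Proof.
have walk j : j.+3 <= N -> a j.+1 (p + j) /\ a j.+2 (p + j).+1.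
  elim: j => [|j IH] lt_jN; first by rewrite addn0.
  have [aj1 aj2] := IH (ltnW lt_jN); split; first by rewrite addnS.
  have [z az] := support_row aS (ltnW lt_jN).
  have /adjacentP[Ez|Ez] := support_adjacent aS aj2 az; first by rewrite addnS Ez.
  have [//|] := rows_differ (i := j.+1) (i' := j.+3) _ (ltnW lt_jN).
  have lt_j3N : 0 < j.+3 < N by exact: lt_jN.
  by move: Ez az => [->] az w; rewrite (interior_row _ aj1) ?(interior_row lt_j3N az) //; lia.
move=> le_k2N; case: (ltnP k.+2 N) => [lt_k2N | ge_k2N].
  by apply: interior_row; [exact: le_k2N | exact: (walk k lt_k2N).1].
case: k le_k2N ge_k2N => [|k] le_k2N ge_k2N; first by move: N_gt2; lia.
by apply: interior_row; [exact: le_k2N | rewrite addnS; exact: (walk k le_k2N).2].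
Qed.

Lemma increasing_interior_row k : 0 < k < N -> a k =1 pred1 (p + k.-1).
Proof. by case: k => [|k] // /andP[_ lt_kN]; apply: increasing_interior_rows. Qed.

Lemma increasing_support_classify k l : a k l ->
  [\/ k = 0 /\ (l.+1 = p \/ p.+1 = l),
      0 < k < N /\ l = p + k.-1
    | k = N /\ ((p + (N - 2)).+1 = l \/ l.+1 = p + (N - 2))].
Proof.
move=> akl; have [le_kN _] := support_bounded aS akl.
have [k0 | k_gt0] := posnP k.
  by rewrite k0 in akl; apply: Or31; split=> //; apply/adjacentP;
     exact: (support_adjacent aS akl a1p).
have [lt_kN | ge_kN] := ltnP k N.
  have mid_k : 0 < k < N by apply/andP.
  by apply: Or32; split=> //; move: akl; rewrite increasing_interior_row // => /eqP.
have aN1 : a N.-1 (p + (N - 2)) by rewrite increasing_interior_row /=; [apply/eqP; lia | lia].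
have kN : k = N by lia.
rewrite kN in akl; apply: Or33; split=> //; apply/adjacentP.
by apply: (support_adjacent aS aN1); rewrite prednK // (ltn_trans _ N_gt2).
Qed.

Lemma increasing_support_pattern i j : i <= N -> j <= N ->
  a i j = fib_pattern N (a 0 2) (a N (N - 2)) i j.
Proof.
have classify := increasing_support_classify.
have [i0 ai0] := support_col aS (leq0n N).
have [iN aiN] := support_col aS (leqnn N).
have p1 : p = 1.
  by case: (classify _ _ ai0) => -[]; case: (classify _ _ aiN) => -[]; lia.
have a00 : a 0 0.
  suff i00 : i0 = 0 by rewrite i00 in ai0.
  by case: (classify _ _ ai0) => -[]; lia.
have aNN : a N N.
  suff iNN : iN = N by rewrite iNN in aiN.
  by case: (classify _ _ aiN) => -[]; lia.
move=> le_iN le_jN; rewrite /fib_pattern; apply/idP/or3P => [aij | ].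
  case: (classify _ _ aij) => -[ik jk]; subst p.
  - case: jk => jk; first by apply: Or31; apply/eqP; lia.
    by apply: Or32; rewrite ik -jk in aij *; rewrite aij.
  - by apply: Or31; apply/eqP; lia.
  - case: jk => jk; first by apply: Or31; apply/eqP; lia.
    have jN : j = N - 2 by lia.
    by apply: Or33; rewrite ik jN in aij *; rewrite aij !eqxx.
case=> [/eqP <- | /andP[/andP[? /eqP->] /eqP->] | /andP[/andP[? /eqP->] /eqP->]] //.
have [-> // | i_gt0] := posnP i.
have [lt_iN | ge_iN] := ltnP i N; last by have -> : i = N by lia.
by rewrite increasing_interior_row ?i_gt0 //= p1; apply/eqP; lia.
Qed.
End Increasing.
End GoodSupport.

Lemma good_support_mirror N a :
  good_support N a -> good_support N (fun i j => (j <= N) && a i (N - j)).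
Proof.
case=> bnd adj row col dif; split.
- by move=> i j /andP[le_jN /bnd[]].
- move=> i x y /andP[le_xN /adj axy] /andP[le_yN /axy]; rewrite /adjacent.
  by case/orP=> /eqP ?; apply/orP; [right | left]; apply/eqP; lia.
- move=> i /row[j aij]; exists (N - j).
  by have [_ le_jN] := bnd _ _ aij; rewrite leq_subr subKn.
- by move=> j le_jN; have [i aij] := col (N - j) (leq_subr _ _); exists i; rewrite le_jN.
- move=> i i' lt_ii' le_i'N; have [j dif_j] := dif _ _ lt_ii' le_i'N.
  have le_jN : j <= N.
    move: dif_j; case: (boolP (a i j)) => [/bnd[] // | _].
    by case: (boolP (a i' j)) => [/bnd[] // | _].
  by exists (N - j); rewrite leq_subr subKn.
Qed.

Lemma support_pattern N a : good_support N a -> 2 < N ->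
  exists r c d, forall i j, i <= N -> j <= N ->
    a i j = fib_pattern N c d i (if r then N - j else j).
Proof.
move=> aS N_gt2; have mS := good_support_mirror aS.
have [p a1p] := support_row aS (ltnW (ltnW N_gt2)).
have [q a2q] := support_row aS (ltnW N_gt2).
have [_ le_pN] := support_bounded aS a1p.
case/adjacentP: (support_adjacent aS a1p a2q) => Eq.
  rewrite -Eq in a2q; exists false, (a 0 2), (a N (N - 2)).
  by move=> i j; apply: (increasing_support_pattern aS N_gt2 a1p a2q).
pose b i j := (j <= N) && a i (N - j).
have b1 : b 1 (N - p) by rewrite /b leq_subr subKn.
have b2 : b 2 (N - p).+1 by rewrite /b (_ : N - (N - p).+1 = q) ?a2q ?andbT; lia.
exists true, (b 0 2), (b N (N - 2)) => i j le_iN le_jN.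
by rewrite -(increasing_support_pattern mS N_gt2 b1 b2 le_iN (leq_subr _ _)) /b leq_subr subKn.
Qed.

Definition corner_ok (t : bool * bool * bool * bool) : bool :=
  let: (u0, u2, v0, v2) := t in [&& u0 || u2, v0 || v2 & (u0, u2) != (v0, v2)].

Lemma support_outer_dim3 a : good_support 2 a ->
  forall i j, i != 1 -> a i j -> (j == 0) || (j == 2).
Proof.
move=> aS; have [p a1p] := support_row aS (isT : 1 <= 2).
have [_ le_p2] := support_bounded aS a1p.
have outer_adj i j : i != 1 -> a i j -> adjacent j p.
  case: i => [|[|[|i]]] // _ aij; first exact: (support_adjacent aS aij a1p).
    by rewrite adjacentC; exact: (support_adjacent aS a1p aij).
  by have [] := support_bounded aS aij.
suff p1 : p = 1 by move=> i j i_neq1 /(outer_adj _ _ i_neq1) /adjacentP; lia.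
apply/eqP/negPn/negP => p_neq1.
have only1 i : i != 1 -> forall j, a i j -> j = 1.
  move=> i_neq1 j aij; have [_ ?] := support_bounded aS aij.
  by have ? := outer_adj _ _ i_neq1 aij; move/eqP: p_neq1 => ?; adjacent_lia.
have [y0 a0y0] := support_row aS (isT : 0 <= 2).
have [y2 a2y2] := support_row aS (isT : 2 <= 2).
move: (only1 0 isT _ a0y0) (only1 2 isT _ a2y2) => y01 y21; subst y0 y2.
apply: (rows_differ aS (isT : 0 < 2) (isT : 2 <= 2)) => j.
by rewrite (row_singleton a0y0 (only1 0 isT)) (row_singleton a2y2 (only1 2 isT)).
Qed.

Lemma support_pattern_dim3 a : good_support 2 a ->
  [/\ forall j, j <= 2 -> a 1 j = (j == 1), ~~ a 0 1, ~~ a 2 1 &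
      corner_ok (a 0 0, a 0 2, a 2 0, a 2 2)].
Proof.
move=> aS; have outer := @support_outer_dim3 a aS.
have [y0 a0y0] := support_row aS (isT : 0 <= 2).
have [y2 a2y2] := support_row aS (isT : 2 <= 2).
have [j dif_j] := support_rows_differ aS (isT : 0 < 2) (isT : 2 <= 2).
have j02 : (j == 0) || (j == 2).
  move: dif_j; case: (boolP (a 0 j)) => [/(outer 0 _ isT) // | _].
  by case: (boolP (a 2 j)) => [/(outer 2 _ isT) // | _].
have row1 j' : a 1 j' -> j' = 1.
  move=> a1j'; have [_ ?] := support_bounded aS a1j'.
  by have /adjacentP ? := support_adjacent aS a0y0 a1j'; have ? := outer 0 _ isT a0y0; lia.
have [y1 a1y1] := support_row aS (isT : 1 <= 2); have y11 := row1 _ a1y1; subst y1.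
split.
- by move=> j' _; apply/idP/eqP => [/row1 | ->].
- by apply/negP => /(outer 0 _ isT).
- by apply/negP => /(outer 2 _ isT).
rewrite /corner_ok; apply/and3P; split.
- by case/orP: (outer 0 _ isT a0y0) => /eqP y0E; rewrite y0E in a0y0; rewrite a0y0 ?orbT.
- by case/orP: (outer 2 _ isT a2y2) => /eqP y2E; rewrite y2E in a2y2; rewrite a2y2 ?orbT.
by apply: contraNneq dif_j => -[e0 e2]; case/orP: j02 => /eqP->; rewrite ?e0 ?e2.
Qed.

Lemma card_corner_ok : #|[pred t | corner_ok t]| <= 6.
Proof.
pose s := [:: (true, true, true, false); (true, true, false, true); (true, false, true, true);
              (true, false, false, true); (false, true, true, true); (false, true, true, false)].
apply: leq_trans (subset_leq_card (_ : _ \subset s)) (card_size s).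
by apply/subsetP => -[[[[] []] []] []].
Qed.

Lemma fib_pattern_adjacent N c d i x y : 1 < N -> i < N ->
  fib_pattern N c d i x -> fib_pattern N c d i.+1 y -> adjacent x y.
Proof.
by move=> ? ?; case: c; case: d; rewrite /fib_pattern /= => ? ?; apply/adjacentP; lia.
Qed.

Section F2.
Local Open Scope ring_scope.

Lemma F2_neq0 (x : 'F_2) : (x != 0) = (x == 1).
Proof. by case: x => -[|[|]]. Qed.

Lemma F2E (x : 'F_2) : x = (x == 1)%:R.
Proof. by case: x => -[|[|]] // ?; apply: val_inj. Qed.

Lemma F2_eq0 (x : 'F_2) : (x == 0) = (x != 1).
Proof. by case: x => -[|[|]]. Qed.

Lemma F2_natP (b : bool) : reflect ((b%:R : 'F_2) = 1) b.
Proof. by case: b; constructor. Qed.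

Lemma F2_nat_eq1 (b : bool) : ((b%:R : 'F_2) == 1) = b.
Proof. by case: b. Qed.

Lemma F2_natD_eq1 (b1 b2 : bool) : (b1%:R + b2%:R : 'F_2) == 1 -> b1 || b2.
Proof. by case: b1; case: b2. Qed.

Lemma F2_natD_disjoint (b1 b2 b3 c d : bool) :
  ~~ (b1 && b2) -> ~~ (b1 && b3) -> ~~ (b2 && b3) ->
  (b1%:R + c%:R * b2%:R + d%:R * b3%:R : 'F_2) = [|| b1, c && b2 | d && b3]%:R.
Proof. by case: b1; case: b2; case: b3; case: c; case: d => //= *; apply: val_inj. Qed.

Lemma F2mx_addrr p q (M : 'M['F_2]_(p, q)) : M + M = 0.
Proof. by apply/matrixP => i j; rewrite !mxE addrr_pchar2 // pchar_Fp. Qed.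
End F2.

Section UnitMatrices.
Local Open Scope ring_scope.

Lemma sum_neq0_term (I : finType) (V : nmodType) (f : I -> V) :
  \sum_i f i != 0 -> exists i, f i != 0.
Proof.
move=> nz; apply/existsP; apply: contraNT nz => /existsPn f0.
by apply/eqP/big1 => i _; apply/eqP/negbNE.
Qed.

Variables (R : comUnitRingType) (m : nat).
Implicit Type A : 'M[R]_m.

Lemma unitmx_row_neq0 A i : A \in unitmx -> exists j, A i j != 0.
Proof.
rewrite unitmxE (expand_det_row _ i) => unitD.
have /sum_neq0_term[j nz_j] : \sum_j A i j * cofactor A i j != 0.
  by apply: contraTneq unitD => ->; rewrite unitr0.
by exists j; apply: contraNneq nz_j => ->; rewrite mul0r.
Qed.

Lemma unitmx_col_neq0 A j : A \in unitmx -> exists i, A i j != 0.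
Proof. by rewrite -unitmx_tr => /(unitmx_row_neq0 j)[i]; rewrite mxE; exists i. Qed.

Lemma unitmx_rows_differ A i i' : A \in unitmx -> i != i' -> exists j, A i j != A i' j.
Proof.
rewrite unitmxE => unitD neq_ii'; apply/existsP; apply: contraTT unitD => /existsPn eqA.
by rewrite (determinant_alternate neq_ii') ?unitr0 // => j; apply/eqP/negbNE.
Qed.

End UnitMatrices.

Section FibonacciGood.
Local Open Scope ring_scope.

Variable m : nat.
Implicit Types (A B : 'M['F_2]_m) (v : 'cV['F_2]_m).

Definition adjacent_rows A := forall i j x y : 'I_m,
  j = i.+1 :> nat -> A i x = 1 -> A j y = 1 -> adjacent x y.

Lemma fib_vecP v : reflect
  (forall i j : 'I_m, j = i.+1 :> nat -> v i 0 = 1 -> v j 0 = 1 -> False) (fib_vec v).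
Proof.
apply: (iffP forallP) => [fv i j ji vi vj | fv i].
  by move: (fv i) => /forallP/(_ j)/implyP/(_ (introT eqP ji)); rewrite vi vj eqxx.
apply/forallP => j; apply/implyP => /eqP ji.
by apply/negP => /andP[/eqP vi /eqP vj]; apply: fv ji vi vj.
Qed.

Lemma delta_colE (k i : 'I_m) : (delta_mx k 0 : 'cV['F_2]_m) i 0 = (i == k)%:R.
Proof. by rewrite mxE eqxx andbT. Qed.

Lemma fib_vec_delta (k : 'I_m) : fib_vec (delta_mx k 0).
Proof.
apply/fib_vecP => i j ji; rewrite !delta_colE => /F2_natP/eqP ik /F2_natP/eqP jk.
by move: ji; rewrite ik jk; lia.
Qed.

Lemma fib_vec_delta2 (k l : 'I_m) : ~~ adjacent k l -> fib_vec (delta_mx k 0 + delta_mx l 0).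
Proof.
move=> nadj; apply/fib_vecP => i j ji; rewrite !mxE !eqxx !andbT -!val_eqE /=.
by move=> /eqP/F2_natD_eq1 ? /eqP/F2_natD_eq1 ?; move: nadj; rewrite /adjacent; lia.
Qed.

Lemma Fgood_unitmx A : Fgood A -> A \in unitmx.
Proof. by case/andP. Qed.

Lemma mul_delta_colE A (k i : 'I_m) : (A *m (delta_mx k 0 : 'cV_m)) i 0 = A i k.
Proof. by rewrite -colE mxE. Qed.

Lemma mul_delta2_colE A (k l i : 'I_m) :
  (A *m (delta_mx k 0 + delta_mx l 0 : 'cV_m)) i 0 = A i k + A i l.
Proof. by rewrite mulmxDr mxE !mul_delta_colE. Qed.

Lemma Fgood_adjacent_rows A : Fgood A -> adjacent_rows A.
Proof.
case/andP=> _ /forallP fibA i j x y ji Aix Ajy.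
have col_not_both z : A i z = 1 -> A j z = 1 -> False.
  move/implyP: (fibA (delta_mx z 0)) => /(_ (fib_vec_delta z))/fib_vecP/(_ i j ji).
  by rewrite !mul_delta_colE.
apply/negPn/negP => nadj.
have Aiy : A i y = 0 by apply/eqP; rewrite F2_eq0; apply/eqP => /col_not_both; apply.
have Ajx : A j x = 0 by apply/eqP; rewrite F2_eq0; apply/eqP; apply: col_not_both.
move/implyP: (fibA (delta_mx x 0 + delta_mx y 0)) => /(_ (fib_vec_delta2 nadj)).
by move=> /fib_vecP/(_ i j ji); rewrite !mul_delta2_colE Aix Ajy Aiy Ajx addr0 add0r; apply.
Qed.

Lemma FgoodP A : reflect (A \in unitmx /\ adjacent_rows A) (Fgood A).
Proof.
apply: (iffP idP) => [goodA | [unitA adjA]].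
  by split; [exact: Fgood_unitmx | exact: Fgood_adjacent_rows].
apply/andP; split=> //; apply/forallP => v; apply/implyP => /fib_vecP fibv.
have entry_eq1 k : (A *m v) k 0 = 1 -> exists2 x, A k x = 1 & v x 0 = 1.
  rewrite mxE => sum1; have /sum_neq0_term[x] : \sum_x A k x * v x 0 != 0 by rewrite sum1.
  by rewrite mulf_eq0 negb_or !F2_neq0 => /andP[/eqP Akx /eqP vx]; exists x.
apply/fib_vecP => i j ji /entry_eq1[x Aix vx] /entry_eq1[y Ajy vy].
by case/adjacentP: (adjA i j x y ji Aix Ajy) => yx;
  [apply: fibv (esym yx) vx vy | apply: fibv (esym yx) vy vx].
Qed.

Lemma Fgood_mul A B : Fgood A -> Fgood B -> Fgood (A *m B).
Proof.
case/andP=> unitA /forallP fibA /andP[unitB /forallP fibB].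
rewrite /Fgood unitmx_mul unitA unitB; apply/forallP => v.
by apply/implyP => /(implyP (fibB v)) /(implyP (fibA _)); rewrite mulmxA.
Qed.

Lemma Fgood1 : Fgood (1%:M : 'M['F_2]_m).
Proof. by rewrite /Fgood unitmx1; apply/forallP => v; rewrite mul1mx implybb. Qed.
End FibonacciGood.

Section Support.
Local Open Scope ring_scope.
Variable n : nat.
Implicit Type A : 'M['F_2]_n.+1.

Definition supp A (i j : nat) : bool :=
  [&& (i <= n)%N, (j <= n)%N & A (inord i) (inord j) == 1].

Lemma suppE A (i j : 'I_n.+1) : supp A i j = (A i j == 1).
Proof. by rewrite /supp !leq_ord !inord_val. Qed.

Lemma good_support_supp A : Fgood A -> good_support n (supp A).
Proof.
case/FgoodP => unitA adjA; split.
- by move=> i j /and3P[].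
- move=> i x y /and3P[le_in le_xn /eqP Ax] /and3P[le_i1n le_yn /eqP Ay].
  have ii1 : (inord i.+1 : 'I_n.+1) = (inord i : 'I_n.+1).+1 :> nat by rewrite !inordK ?ltnS.
  by have := adjA _ _ _ _ ii1 Ax Ay; rewrite !inordK ?ltnS.
- move=> i le_in; have [j] := unitmx_row_neq0 (inord i) unitA.
  by rewrite F2_neq0 -suppE inordK ?ltnS // => ?; exists j.
- move=> j le_jn; have [i] := unitmx_col_neq0 (inord j) unitA.
  by rewrite F2_neq0 -suppE inordK ?ltnS // => ?; exists i.
move=> i i' lt_ii' le_i'n; have le_in := ltnW (leq_trans lt_ii' le_i'n).
have neq : inord i != inord i' :> 'I_n.+1.
  by rewrite -val_eqE /= !inordK ?ltnS // neq_ltn lt_ii'.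
have [j neq_j] := unitmx_rows_differ unitA neq; exists j.
rewrite /supp le_in le_i'n leq_ord !inord_val /=; apply: contra neq_j => /eqP eq1.
by rewrite [A (inord i) j]F2E [A (inord i') j]F2E eq1.
Qed.
End Support.

Section GoodMatrices.
Local Open Scope ring_scope.

Variable n : nat.
Hypothesis n_gt1 : (1 < n)%N.
Implicit Type A : 'M['F_2]_n.+1.

Definition fib_mx (c d : bool) : 'M['F_2]_n.+1 :=
  1%:M + c%:R *: delta_mx (inord 0) (inord 2) + d%:R *: delta_mx (inord n) (inord (n - 2)).

Lemma fib_mxE c d i j : fib_mx c d i j = (fib_pattern n c d i j)%:R.
Proof.
rewrite !mxE -!val_eqE /= !inordK; try lia.
rewrite /fib_pattern -!andbA F2_natD_disjoint //; apply/negP; lia.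
Qed.

Lemma fib_mx_involutive c d : (2 < n)%N || ~~ d -> fib_mx c d *m fib_mx c d = 1%:M.
Proof.
move=> n_gt2_or_nd; rewrite /fib_mx.
set X := _ *: delta_mx _ _; set Y := _ *: delta_mx _ _.
have inord_eq (k l : nat) : (k <= n)%N -> (l <= n)%N ->
    ((inord k : 'I_n.+1) == inord l) = (k == l).
  by move=> le_kn le_ln; rewrite -val_eqE /= !inordK.
have mul_delta0 (a b : 'F_2) (i j k l : nat) : (j <= n)%N -> (k <= n)%N -> (j != k)%N ->
    (a *: delta_mx (inord i) (inord j) : 'M_n.+1) *m (b *: delta_mx (inord k) (inord l)) = 0.
  move=> le_jn le_kn neq_jk.
  by rewrite -scalemxAl -scalemxAr mul_delta_mx_0 ?scaler0 ?inord_eq.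
have XX : X *m X = 0 by apply: mul_delta0; lia.
have YY : Y *m Y = 0 by apply: mul_delta0; lia.
have [XY YX] : X *m Y = 0 /\ Y *m X = 0.
  case/orP: n_gt2_or_nd => [n_gt2 | /negPf d0]; first by split; apply: mul_delta0; lia.
  by rewrite /Y d0 scale0r mulmx0 mul0mx.
rewrite !mulmxDl !mulmxDr !mul1mx !mulmx1 XX XY YX YY !addr0; clearbody X Y.
by rewrite (addrAC _ Y X) -(addrA _ X X) F2mx_addrr addr0 -addrA F2mx_addrr addr0.
Qed.

Definition rev_perm : 'S_n.+1 := perm (@rev_ord_inj n.+1).

Lemma rev_perm_invol : (rev_perm * rev_perm = 1)%g.
Proof. by apply/permP => i; rewrite permM !permE rev_ordK. Qed.

Lemma rev_permV : (rev_perm^-1 = rev_perm)%g.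
Proof. by rewrite -[LHS]mulg1 -rev_perm_invol mulgA mulVg mul1g. Qed.

Definition rev_mx : 'M['F_2]_n.+1 := perm_mx rev_perm.

Lemma rev_mx_involutive : rev_mx *m rev_mx = 1%:M.
Proof. by rewrite -perm_mxM rev_perm_invol perm_mx1. Qed.

Lemma rev_mx_mulE A i j : (rev_mx *m A) i j = A (rev_ord i) j.
Proof. by rewrite -row_permE mxE permE. Qed.

Lemma mul_rev_mxE A i j : (A *m rev_mx) i j = A i (rev_ord j).
Proof. by rewrite /rev_mx -rev_permV -col_permE mxE permE. Qed.

Lemma fib_mx_good c d : (2 < n)%N || ~~ d -> Fgood (fib_mx c d).
Proof.
move=> n_gt2_or_nd; apply/FgoodP; split.
  by case: (mulmx1_unit (fib_mx_involutive c n_gt2_or_nd)).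
move=> i j x y ji; rewrite !fib_mxE => /F2_natP pix /F2_natP pjy.
apply: (fib_pattern_adjacent n_gt1 _ pix); last by rewrite -ji.
by rewrite -ltnS -ji ltn_ord.
Qed.

Lemma rev_mx_good : Fgood rev_mx.
Proof.
apply/FgoodP; split; first exact: unitmx_perm.
move=> i j x y ji; rewrite !mxE !permE => /F2_natP/eqP <- /F2_natP/eqP <- /=.
by apply/adjacentP; rewrite ji; have := ltn_ord j; lia.
Qed.

Definition good_mx (r c d : bool) : 'M['F_2]_n.+1 :=
  fib_mx c d *m (if r then rev_mx else 1%:M).

Lemma good_mxE r c d i j :
  good_mx r c d i j = (fib_pattern n c d i (if r then (n - j)%N else j))%:R.
Proof. by case: r; rewrite /good_mx ?mul_rev_mxE ?mulmx1 fib_mxE /= ?subSS. Qed.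

Lemma rev_mx_neq1 : rev_mx != 1%:M.
Proof.
apply/eqP => /matrixP/(_ ord0 ord0); rewrite !mxE permE -val_eqE /=.
by move/F2_natP/eqP; lia.
Qed.

Lemma fib_mx_neq1 d : fib_mx true d != 1%:M.
Proof.
by apply/eqP => /matrixP/(_ (inord 0) (inord 2)); rewrite fib_mxE !mxE -val_eqE /= !inordK.
Qed.

Lemma rev_fib_mx_noncommuting : rev_mx *m fib_mx true false != fib_mx true false *m rev_mx.
Proof.
apply/eqP => /matrixP/(_ (inord 0) (inord (n - 2))).
rewrite rev_mx_mulE mul_rev_mxE !fib_mxE /= !inordK ?subSS ?subn0; try lia.
have [-> nn2] : (n - (n - 2) = 2)%N /\ (n == n - 2)%N = false by split; [|apply/eqP]; lia.
by rewrite /fib_pattern nn2 eqxx /= => /F2_natP; rewrite orbF; lia.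
Qed.

Hypothesis n_gt2 : (2 < n)%N.

Lemma good_mx_good r c d : Fgood (good_mx r c d).
Proof.
have good_fib : Fgood (fib_mx c d) by apply: fib_mx_good; rewrite n_gt2.
case: r; rewrite /good_mx; first exact: Fgood_mul good_fib rev_mx_good.
by rewrite mulmx1.
Qed.

Lemma Fgood_good_mx A : Fgood A -> exists r c d, A = good_mx r c d.
Proof.
move=> goodA; have [r [c [d pat]]] := support_pattern (good_support_supp goodA) n_gt2.
exists r, c, d; apply/matrixP => i j.
by rewrite good_mxE [LHS]F2E -suppE pat ?leq_ord.
Qed.

Definition good_mx_code A : bool * bool * bool :=
  let r := A (inord 0) (inord 0) == 0 in
  (r, A (inord 0) (inord (if r then n - 2 else 2)%N) == 1,
      A (inord n) (inord (if r then 2 else n - 2)%N) == 1).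

Lemma good_mxK : cancel (fun t => good_mx t.1.1 t.1.2 t.2) good_mx_code.
Proof.
have [n0 n2 nn2 nn22] : [/\ (n == 0)%N = false, (n == 2)%N = false, (n == n - 2)%N = false
                        & (n - (n - 2))%N = 2%N] by split; [apply/eqP | apply/eqP | apply/eqP | ]; lia.
case=> [[[] c] d]; rewrite /good_mx_code /= !good_mxE !inordK ?ltnS ?leq_subr ?n_gt1 //;
  rewrite /fib_pattern ?(subn0, eq_sym 0%N, n0, n2, eqxx, andbF, andbT, orbF) /=;
  by rewrite ?(nn22, nn2, n0, eqxx, andbF, andbT, orbF, F2_nat_eq1, leq_subr) //=.
Qed.

Lemma card_Fgood : #|[set A : 'M['F_2]_n.+1 | Fgood A]| = 8%N.
Proof.
have -> : [set A | Fgood A] = [set good_mx t.1.1 t.1.2 t.2 | t : bool * bool * bool].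
  apply/setP => A; rewrite inE; apply/idP/imsetP => [/Fgood_good_mx[r [c [d ->]]] | [t _ ->]].
    by exists (r, c, d).
  exact: good_mx_good.
by rewrite card_imset ?cardsT ?card_prod ?card_bool //; apply: can_inj good_mxK.
Qed.
End GoodMatrices.

Definition corners (A : 'M['F_2]_3) := (supp A 0 0, supp A 0 2, supp A 2 0, supp A 2 2).

Section Dimension3.
Local Open Scope ring_scope.

Lemma corners_inj : {in [pred A | Fgood A] &, injective corners}.
Proof.
move=> A B /good_support_supp/support_pattern_dim3[rowA A01 A21 _].
move=> /good_support_supp/support_pattern_dim3[rowB B01 B21 _] [e00 e02 e20 e22].
suff eq_supp (i j : 'I_3) : supp A i j = supp B i j.
  by apply/matrixP => i j; rewrite [LHS]F2E [RHS]F2E -!suppE eq_supp.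
case: i j => [[|[|[|i]]] lt_i3] [[|[|[|j]]] lt_j3] //=;
  by rewrite ?rowA ?rowB ?(negbTE A01, negbTE B01, negbTE A21, negbTE B21).
Qed.

Lemma card_Fgood3 : (#|[set A : 'M['F_2]_3 | Fgood A]| <= 6)%N.
Proof.
rewrite -(card_in_imset (f := corners)); last by move=> A B; rewrite !inE; apply: corners_inj.
apply: leq_trans (subset_leq_card _) card_corner_ok; apply/subsetP => _ /imsetP[A goodA ->].
by rewrite inE in goodA; have [_ _ _] := support_pattern_dim3 (good_support_supp goodA).
Qed.
End Dimension3.

Section Involutions.
Local Open Scope group_scope.
Variable gT : finGroupType.
Implicit Types (x y : gT) (G : {group gT}).

Lemma card_gen_noncommuting_involutions x y :
  #[x] = 2%N -> #[y] = 2%N -> x * y != y * x ->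
  (5 < #|<<[set x; y]>>|)%N.
Proof.
set K := <<_>> => ox oy nc.
have xK : x \in K by rewrite mem_gen // !inE eqxx.
have yK : y \in K by rewrite mem_gen // !inE eqxx orbT.
have even : (2 %| #|K|)%N by rewrite -ox order_dvdG.
have nab : ~~ abelian K by apply: contra nc => /centsP cK; rewrite (cK x xK y yK).
have neq2 : #|K| != 2%N.
  by apply: contra nab => /eqP oK; rewrite cyclic_abelian // prime_cyclic ?oK.
have neq4 : #|K| != 4%N.
  by apply: contra nab => /eqP oK; rewrite (card_p2group_abelian (p := 2)) ?oK.
by move: (cardG_gt0 K) neq2 neq4; case/dvdnP: even => k ->; lia.
Qed.

Lemma isog_dihedral_noncommuting_involutions G x y :
  x \in G -> y \in G -> #[x] = 2%N -> #[y] = 2%N -> x * y != y * x -> (#|G| <= 8)%N ->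
  (5 < #|G|)%N /\ G \isog 'D_#|G|.
Proof.
move=> xG yG ox oy nc G_le8; set K := <<[set x; y]>>.
have K_gt5 : (5 < #|K|)%N := card_gen_noncommuting_involutions ox oy nc.
have sKG : K \subset G by rewrite gen_subG; apply/subsetP => z; rewrite !inE => /orP[] /eqP->.
have GK : G :=: K.
  apply/eqP; rewrite eq_sym eqEcard sKG /=.
  have /dvdnP[k oG] := cardSg sKG; move: (cardG_gt0 G) G_le8 K_gt5.
  by rewrite oG; case: k {oG} => [|[|k]]; rewrite ?mul0n ?mul1n // !mulSn /= -/K; lia.
split; first by rewrite GK.
by rewrite GK; apply: involutions_gen_dihedral => //; apply: contraNneq nc => ->.
Qed.
End Involutions.

Section GoodGroup.
Local Open Scope ring_scope.
Variable n : nat.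
Hypothesis n_gt1 : (1 < n)%N.
Local Notation GL := {'GL_n.+1['F_2]}.

Lemma group_set_Fgood : group_set [set g : GL | Fgood (GLval g)].
Proof.
apply/group_setP; split; first by rewrite inE GL_1E Fgood1.
by move=> u v; rewrite !inE GL_MxE; apply: Fgood_mul.
Qed.

Lemma card_Fgood_GL :
  #|[set g : GL | Fgood (GLval g)]| = #|[set A : 'M['F_2]_n.+1 | Fgood A]|.
Proof.
rewrite -(card_imset _ val_inj); apply: eq_card => A; rewrite inE.
apply/imsetP/idP => [[u] | goodA]; first by rewrite inE => goodu ->.
by exists (@FinRing.Unit _ A (Fgood_unitmx goodA)); rewrite ?inE.
Qed.

Lemma order_GL_involution (u : GL) :
  GLval u *m GLval u = 1%:M -> GLval u != 1%:M -> #[u]%g = 2%N.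
Proof.
move=> uu1 u_neq1; apply: nt_prime_order => //.
  apply: val_inj; rewrite expgS expg1; change (GLval (u * u)%g = GLval 1%g).
  by rewrite GL_MxE uu1.
Qed.

Definition rev_GL : GL := @FinRing.Unit _ (rev_mx n) (unitmx_perm _ _).
Definition fib_GL : GL :=
  @FinRing.Unit _ (fib_mx n true false) (Fgood_unitmx (fib_mx_good n_gt1 true (d := false) (orbT _))).

Lemma rev_GL_order : #[rev_GL]%g = 2%N.
Proof. by apply: order_GL_involution; [apply: rev_mx_involutive | apply: rev_mx_neq1]. Qed.

Lemma fib_GL_order : #[fib_GL]%g = 2%N.
Proof.
apply: order_GL_involution; last exact: fib_mx_neq1.
by apply: fib_mx_involutive; rewrite ?orbT.
Qed.

Lemma rev_fib_GL_noncommuting : (rev_GL * fib_GL != fib_GL * rev_GL)%g.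
Proof. by apply: contra (rev_fib_mx_noncommuting n_gt1) => /eqP/(congr1 GLval)/eqP. Qed.

Lemma isog_dihedral_Fgood_GL : (#|[set A : 'M['F_2]_n.+1 | Fgood A]| <= 8)%N ->
  (5 < #|[set A : 'M['F_2]_n.+1 | Fgood A]|)%N /\
  ([set g : GL | Fgood (GLval g)] \isog 'D_#|[set A : 'M['F_2]_n.+1 | Fgood A]|)%g.
Proof.
rewrite -card_Fgood_GL => card_le8.
have revG : rev_GL \in Group group_set_Fgood by rewrite inE; apply: rev_mx_good.
have fibG : fib_GL \in Group group_set_Fgood.
  by rewrite inE; apply: fib_mx_good; rewrite ?orbT.
exact: isog_dihedral_noncommuting_involutions revG fibG rev_GL_order fib_GL_order
  rev_fib_GL_noncommuting card_le8.
Qed.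
End GoodGroup.

Lemma order_tperm (T : finType) (x y : T) : x != y -> #[tperm x y]%g = 2%N.
Proof.
move=> neq_xy; apply: nt_prime_order => //; first by rewrite expgS expg1 tperm2.
by apply: contraNneq neq_xy => /permP/(_ x); rewrite tpermL perm1 => ->.
Qed.

Lemma isog_Sym3_dihedral : ([set: 'S_3] \isog 'D_6)%g.
Proof.
pose i0 : 'I_3 := ord0; pose i1 : 'I_3 := Ordinal (isT : 1 < 3).
pose i2 : 'I_3 := Ordinal (isT : 2 < 3).
have nc : (tperm i0 i1 * tperm i1 i2 != tperm i1 i2 * tperm i0 i1)%g.
  by apply/eqP => /permP/(_ i0); rewrite !permM (@tpermD _ i1 i2 i0) // !tpermL.
have card_S3 : #|[set: 'S_3]| = 6 by rewrite cardsT card_Sn.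
have := isog_dihedral_noncommuting_involutions (G := [set: 'S_3]%G) (in_setT _) (in_setT _)
  (@order_tperm _ i0 i1 isT) (@order_tperm _ i1 i2 isT) nc.
by rewrite /= card_S3 => /(_ isT)[].
Qed.

Theorem theorem1 :
  (forall n : nat, (3 <= n)%N ->
     #|[set A : 'M['F_2]_n.+1 | Fgood A]| = 8%N /\
     group_set [set g : {'GL_n.+1['F_2]} | Fgood (GLval g)] /\
     ([set g : {'GL_n.+1['F_2]} | Fgood (GLval g)] \isog 'D_8)%g)
  /\
  (#|[set A : 'M['F_2]_3 | Fgood A]| = 6%N /\
   group_set [set g : {'GL_3['F_2]} | Fgood (GLval g)] /\
   ([set g : {'GL_3['F_2]} | Fgood (GLval g)] \isog [set: 'S_3])%g).
Proof.
split.
  move=> n n_gt2; have n_gt1 := ltnW n_gt2; have card8 := card_Fgood n_gt1 n_gt2.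
  split=> //; split; first exact: group_set_Fgood.
  by have [_] := isog_dihedral_Fgood_GL n_gt1 (eq_leq card8); rewrite card8.
have [card_gt5 iso] :=
  isog_dihedral_Fgood_GL (isT : 1 < 2) (leq_trans card_Fgood3 (isT : 6 <= 8)).
have card6 : #|[set A : 'M['F_2]_3 | Fgood A]| = 6 by apply/eqP; rewrite eqn_leq card_Fgood3.
split=> //; split; first exact: group_set_Fgood.
rewrite card6 in iso; apply: (isog_trans (G := Group (group_set_Fgood 2)) iso).
by rewrite isog_sym isog_Sym3_dihedral.
Qed.
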